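(* Let $d\ge1$, $p>1$ and $s\in(0,1)$ with $sp<d$, and let $\mathcal{C}=C(d,p)\,\frac{s(1-s)}{(d-sp)^{p-1}}$ be the fractional Sobolev constant described in the context. Then for every $u\in W^{s,p}(\mathbb{R}^d)$ and every real $c>0$, \[ \int_{\mathbb{R}^d}|u(x)|^p\log\left(\frac{|u(x)|^p}{\|u\|_{L^p(\mathbb{R}^d)}^p}\right)dx+\frac{d}{s}(1+\log c)\|u\|_{L^p(\mathbb{R}^d)}^p\le \frac{d\,e^{p-1}c^p\,\mathcal{C}}{sp}\int_{\mathbb{R}^d}\int_{\mathbb{R}^d}\frac{|u(x)-u(y)|^p}{|x-y|^{d+sp}}\,dx\,dy. \]
   Context: $W^{s,p}(\mathbb{R}^d)$ is the completion of $C_c^\infty(\mathbb{R}^d)$ under the norm $(\|u\|_{L^p}^p+[u]_{W^{s,p}}^p)^{1/p}$, where $[u]_{W^{s,p}(\mathbb{R}^d)}^p=\int_{\mathbb{R}^d}\int_{\mathbb{R}^d}\frac{|u(x)-u(y)|^p}{|x-y|^{d+sp}}dx\,dy$. $C(d,p)>0$ is a constant depending only on $d$ and $p$ such that, with $\mathcal{C}=C(d,p)\frac{s(1-s)}{(d-sp)^{p-1}}$ and $p^*_s=\frac{dp}{d-sp}$, the fractional Sobolev inequality $\|u\|_{L^{p^*_s}(\mathbb{R}^d)}\le \mathcal{C}^{1/p}[u]_{W^{s,p}(\mathbb{R}^d)}$ holds for all $s\in(0,1)$ with $sp<d$ and all $u\in W^{s,p}(\mathbb{R}^d)$ (such a constant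 exists by a theorem of Maz'ya and Shaposhnikova). *)

From HB Require Import structures.
From mathcomp Require Import all_boot all_order all_algebra.
From mathcomp Require Import all_classical all_reals all_analysis.
Set Implicit Arguments. Unset Strict Implicit. Unset Printing Implicit Defensive.
Import Order.TTheory GRing.Theory Num.Theory.
Import numFieldNormedType.Exports.
Local Open Scope classical_set_scope.
Local Open Scope ring_scope.

(* R^d is modelled as d.-tuple R, with the product (Borel) sigma-algebra
   generated by the coordinate projections (library instance). *)

Section Defs.
Variables (R : realType) (d : nat).

Definition edist (x y : d.-tuple R) : R :=
  Num.sqrt (\sum_(i < d) (tnth x i - tnth y i) ^+ 2).

Definition box (a b : d.-tuple R) : set (d.-tuple R) :=
  [set x | forall i : 'I_d, tnth a i <= tnth x i <= tnth b i].

(* mu is (the Borel restriction of) the Lebesgue measure on R^d: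
   it gives every closed box its Euclidean volume. This characterizes the
   measure uniquely on the product sigma-algebra. *)
Definition is_lebesgue (mu : {measure set (d.-tuple R) -> \bar R}) : Prop :=
  forall a b : d.-tuple R, (forall i, tnth a i <= tnth b i) ->
    mu (box a b) = (\prod_(i < d) (tnth b i - tnth a i))%:E.

Definition upd (x : d.-tuple R) (i : 'I_d) (t : R) : d.-tuple R :=
  [tuple if j == i then t else tnth x j | j < d].

Definition partial (i : 'I_d) (f : d.-tuple R -> R) : d.-tuple R -> R :=
  fun x => derive1 (fun t => f (upd x i t)) (tnth x i).

Definition has_partial (i : 'I_d) (f : d.-tuple R -> R) : Prop :=
  forall x, derivable (fun t => f (upd x i t)) (tnth x i) 1.

Fixpoint iter_partial (js : seq 'I_d) (f : d.-tuple R -> R) :=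
  match js with
  | [::] => f
  | i :: js' => partial i (iter_partial js' f)
  end.

Definition econtinuous (f : d.-tuple R -> R) : Prop :=
  forall x (e : R), 0 < e -> exists2 del : R, 0 < del &
    forall y, edist x y < del -> `|f y - f x| < e.

Definition smooth (f : d.-tuple R -> R) : Prop :=
  forall js : seq 'I_d, econtinuous (iter_partial js f) /\
    forall i, has_partial i (iter_partial js f).

Definition compact_support (f : d.-tuple R -> R) : Prop :=
  exists M : R, forall x, M < edist x [tuple of nseq d 0] -> f x = 0.

Definition Cc_infty (f : d.-tuple R -> R) : Prop := smooth f /\ compact_support f.

Variable mu : {measure set (d.-tuple R) -> \bar R}.

Definition gagliardo_p (s p : R) (u : d.-tuple R -> R) : \bar R :=
  (\int[mu]_x \int[mu]_y
     ((`|u x - u y| `^ p) / (edist x y `^ (d%:R + s * p)))%:E)%E.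

Definition Lp_p (p : R) (u : d.-tuple R -> R) : \bar R :=
  (\int[mu]_x (`|u x| `^ p)%:E)%E.

(* W^{s,p}(R^d): the completion of C_c^infty under the norm
   (||.||_p^p + [.]^p)^{1/p}, realized concretely as the measurable functions
   that are limits of C_c^infty functions in that norm. *)
Definition in_Wsp (s p : R) (u : d.-tuple R -> R) : Prop :=
  measurable_fun [set: d.-tuple R] u /\
  exists phi : nat -> d.-tuple R -> R, (forall n, Cc_infty (phi n)) /\
    ((fun n => Lp_p p (fun x => phi n x - u x)%R + gagliardo_p s p (fun x => phi n x - u x)%R)%E
       @ \oo --> 0%E).

Definition calC (Cdp s p : R) : R :=
  Cdp * (s * (1 - s)) / ((d%:R - s * p) `^ (p - 1)).

Definition sobolev_constant (Cdp p : R) : Prop :=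
  0 < Cdp /\
  forall s : R, 0 < s < 1 -> s * p < d%:R ->
  forall u, in_Wsp s p u ->
    ('N[mu]_((d%:R * p / (d%:R - s * p))%:E)[EFin \o u] <=
       (calC Cdp s p `^ p^-1)%:E * (gagliardo_p s p u `^ p^-1))%E.

End Defs.

From HB Require Import structures.
From mathcomp Require Import all_boot all_order all_algebra.
From mathcomp Require Import all_classical all_reals all_analysis measurable_realfun.
From mathcomp Require Import ring lra.
Set Implicit Arguments.
Unset Strict Implicit.
Unset Printing Implicit Defensive.

Import Order.TTheory GRing.Theory Num.Theory.
Import numFieldNormedType.Exports.
Local Open Scope classical_set_scope.
Local Open Scope ring_scope.

(* Put r = d / (d - sp), so that p r = p*_s and r / (r - 1) = d / (sp), and f = |u|^p
   with N = ||f||_1. The tangent bound 1 + z <= e^z gives, pointwise and for every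
   real b,
     f ln (f / N) <= (e^-b f^r / N^(r-1) + (b - 1) f) / (r - 1).
   Integrating and optimising in b bounds the entropy of f by
   r / (r - 1) * N ln (||f||_r / N); a second use of 1 + z <= e^z then gives
     N (ln (||f||_r / N) + p (1 + ln c)) <= e^(p-1) c^p ||f||_r,
   and ||f||_r = ||u||_(p r)^p is at most calC times the Gagliardo seminorm by the
   fractional Sobolev inequality. *)

Section real_inequalities.
Variable R : realType.

Lemma mulr_ln_le_powR (r N b x : R) : 1 < r -> 0 < N -> 0 <= x ->
  x * ln (x / N) <= (expR (- b) * x `^ r / N `^ (r - 1) + (b - 1) * x) / (r - 1).
Proof.
move=> r1 N0; rewrite le_eqVlt => /predU1P[<-|x0].
  by rewrite powR0 ?gt_eqF ?(lt_trans ltr01) // !(mul0r, mulr0, addr0).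
rewrite ler_pdivlMr ?subr_gt0 // ln_div ?posrE //.
rewrite /powR !gt_eqF ?subr_gt0 // -{1 4}(lnK (x:=x)) ?posrE //.
set a := ln x; set n := ln N; set z := - b + (r - 1) * (a - n).
have ez : expR (- b) * expR (r * a) / expR ((r - 1) * n) = expR a * expR z.
  by rewrite -expRN -!expRD /z; congr expR; ring.
rewrite ez; have := ler_wpM2l (ltW (expR_gt0 a)) (expR_ge1Dx z); rewrite /z; nra.
Qed.

Lemma exists_entropy_parameter (r N m t : R) : 1 < r -> 0 < N -> 0 <= m ->
  exists b, (expR (- b) * m `^ r / N `^ (r - 1) + (b - 1) * N) / (r - 1)
              + r / (r - 1) * t * N <= r / (r - 1) * expR (t - 1) * m.
Proof.
move=> r1 N0; have r10 : r - 1 != 0 by rewrite subr_eq0 gt_eqF.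
rewrite le_eqVlt => /predU1P[<-|m0].
  exists (1 - r * t); rewrite powR0 ?gt_eqF ?(lt_trans ltr01) // mulr0 mul0r add0r.
  by rewrite mulr0 [X in X <= _](_ : _ = 0) //; field.
exists (r * ln (m / N)).
set w := ln (m / N) + t - 1.
have eN : expR (- (r * ln (m / N))) * m `^ r / N `^ (r - 1) = N.
  rewrite /powR !gt_eqF // -!expRN -!expRD ln_div ?posrE //.
  by rewrite -[RHS]lnK ?posrE //; congr expR; ring.
have em : expR (t - 1) * m = N * expR w.
  rewrite /w ln_div ?posrE // -{1}(lnK (x:=m)) ?posrE // -{1}(lnK (x:=N)) ?posrE //.
  by rewrite -!expRD; congr expR; ring.
rewrite eN -[leRHS]mulrA em.
have -> : (N + (r * ln (m / N) - 1) * N) / (r - 1) + r / (r - 1) * t * N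
          = r / (r - 1) * (N * (1 + w)) by rewrite /w; field.
rewrite ler_wpM2l ?ler_wpM2l ?expR_ge1Dx ?(ltW N0) //.
by rewrite divr_ge0 ?subr_ge0 ?ltW // (lt_trans ltr01).
Qed.

End real_inequalities.

Section conjugate_exponent.
Variables (F : realFieldType) (a b : F).
Hypotheses (b0 : 0 < b) (ba : b < a).

Lemma divrB_gt1 : 1 < a / (a - b).
Proof. by rewrite ltr_pdivlMr ?subr_gt0 // mul1r ltrBlDr ltrDl. Qed.

Lemma divrB_conjugate : a / (a - b) / (a / (a - b) - 1) = a / b.
Proof.
have ab0 : a - b != 0 by rewrite subr_eq0 gt_eqF.
have -> : a / (a - b) - 1 = b / (a - b) by field.
by field; rewrite ab0 gt_eqF.
Qed.

End conjugate_exponent.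

Section entropy.
Context d (T : measurableType d) (R : realType).
Variable mu : {measure set T -> \bar R}.
Local Open Scope ereal_scope.

Lemma le_integral_measurable (D : set T) (f g : T -> \bar R) : measurable D ->
  measurable_fun D f -> mu.-integrable D g -> {in D, forall x, f x <= g x} ->
  \int[mu]_(x in D) f x <= \int[mu]_(x in D) g x.
Proof.
move=> mD mf /integrableP[mg _] fg; rewrite integralE [leRHS]integralE leeB //.
- apply: ge0_le_integral => //; [exact: measurable_funepos|exact: measurable_funepos|].
  by move=> x /mem_set; exact: funepos_le.
- apply: ge0_le_integral => //; [exact: measurable_funeneg|exact: measurable_funeneg|].
  by move=> x /mem_set; exact: funeneg_le.
Qed.

Lemma ge0_fin_integrable (f : T -> R) (M : R) :
  measurable_fun setT f -> (forall x, 0 <= f x)%R ->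
  \int[mu]_x (f x)%:E = M%:E -> mu.-integrable setT (fun x => (f x)%:E).
Proof.
move=> mf f0 fM; apply/integrableP; split; first exact/measurable_EFinP.
rewrite (eq_integral (fun x => (f x)%:E)) ?fM ?ltry //.
by move=> x _; rewrite gee0_abs ?lee_fin.
Qed.

Variables (f : T -> R) (r N : R).
Hypotheses (mf : measurable_fun setT f) (f0 : forall x, (0 <= f x)%R).
Hypotheses (r1 : (1 < r)%R) (N0 : (0 < N)%R) (fN : \int[mu]_x (f x)%:E = N%:E).

Lemma integral_entropy_le (M b : R) : \int[mu]_x (f x `^ r)%:E = M%:E ->
  \int[mu]_x (f x * ln (f x / N))%:E <=
    ((expR (- b) * M / N `^ (r - 1) + (b - 1) * N) / (r - 1))%:E.
Proof.
move=> fM.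
have mfr : measurable_fun setT (fun x => f x `^ r)%R.
  exact: (measurableT_comp (measurable_powR r)).
have if1 := ge0_fin_integrable mf f0 fN.
have ifr := ge0_fin_integrable mfr (fun x => powR_ge0 _ _) fM.
have r10 : (r - 1 != 0)%R by rewrite subr_eq0 gt_eqF.
have Nr0 : (N `^ (r - 1) != 0)%R by rewrite gt_eqF ?powR_gt0.
set k1 := (expR (- b) / N `^ (r - 1) / (r - 1))%R; set k2 := ((b - 1) / (r - 1))%R.
apply: (@le_trans _ _ (\int[mu]_x (k1%:E * (f x `^ r)%:E + k2%:E * (f x)%:E))).
  apply: le_integral_measurable => //.
  - apply/measurable_EFinP; apply: measurable_funM => //.
    apply: measurableT_comp; first exact: measurable_ln.
    by apply: measurable_funM => //; exact: measurable_cst.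
  - by apply: integrableD => //; exact: integrableZl.
  move=> x _; rewrite -!EFinM -EFinD lee_fin /k1 /k2.
  apply: le_trans (mulr_ln_le_powR b r1 N0 (f0 x)) _.
  by rewrite le_eqVlt; apply/predU1P; left; field; rewrite r10 Nr0.
rewrite integralD //; [|exact: integrableZl|exact: integrableZl].
rewrite !integralZl // fM fN -!EFinM -EFinD lee_fin /k1 /k2.
by rewrite le_eqVlt; apply/predU1P; left; field; rewrite r10 Nr0.
Qed.

Lemma integral_entropy_le_powR_norm (m t : R) : (0 <= m)%R ->
  \int[mu]_x (f x `^ r)%:E = (m `^ r)%:E ->
  \int[mu]_x (f x * ln (f x / N))%:E + (r / (r - 1) * t * N)%:E <=
    (r / (r - 1) * expR (t - 1) * m)%:E.
Proof.
move=> m0 fm; have [b hb] := exists_entropy_parameter t r1 N0 m0.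
by apply: le_trans (leeD2r _ (integral_entropy_le b fm)) _; rewrite -EFinD lee_fin.
Qed.

End entropy.

Lemma gagliardo_p_ge0 (R : realType) (d : nat) (mu : {measure set (d.-tuple R) -> \bar R})
    (s p : R) (u : d.-tuple R -> R) :
  (0 <= gagliardo_p mu s p u)%E.
Proof.
apply: integral_ge0 => x _; apply: integral_ge0 => y _.
by rewrite lee_fin divr_ge0 ?powR_ge0.
Qed.

Lemma Lp_p_ge0 (R : realType) (d : nat) (mu : {measure set (d.-tuple R) -> \bar R})
    (p : R) (u : d.-tuple R -> R) :
  (0 <= Lp_p mu p u)%E.
Proof. by apply: integral_ge0 => x _; rewrite lee_fin powR_ge0. Qed.

Lemma calC_gt0 (R : realType) (d : nat) (Cdp s p : R) :
  0 < Cdp -> 0 < s < 1 -> s * p < d%:R -> 0 < calC d Cdp s p.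
Proof.
move=> C0 /andP[s0 s1] spd; rewrite /calC divr_gt0 ?powR_gt0 ?subr_gt0 //.
by rewrite !mulr_gt0 ?subr_gt0.
Qed.

Section sobolev.
Variables (R : realType) (d : nat) (mu : {measure set (d.-tuple R) -> \bar R}).
Variables (Cdp p s : R) (u : d.-tuple R -> R).
Hypotheses (p1 : 1 < p) (s01 : 0 < s < 1) (spd : s * p < d%:R).
Hypotheses (sob : sobolev_constant mu Cdp p) (wsp : in_Wsp mu s p u).

Lemma sobolev_integral_powR (g : R) : gagliardo_p mu s p u = g%:E ->
  exists2 m, 0 <= m <= calC d Cdp s p * g &
    (\int[mu]_x ((`|u x| `^ p) `^ (d%:R / (d%:R - s * p)))%:E
      = (m `^ (d%:R / (d%:R - s * p)))%:E)%E.
Proof.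
move=> ug; have := sob.2 s s01 spd u wsp.
rewrite ug poweR_EFin -EFinM unlock /= => uq.
have /andP[s0 _] := s01; have p0 : 0 < p := lt_trans ltr01 p1.
set r := d%:R / _; set q := d%:R * p / _ in uq.
have r1 : 1 < r by rewrite divrB_gt1 ?mulr_gt0.
have qE : q = p * r by rewrite /q /r; ring.
have q0 : 0 < q by rewrite qE mulr_gt0 ?(lt_trans ltr01).
under eq_integral do rewrite -powRrM -qE.
have M0 : (0 <= \int[mu]_x (`|u x| `^ q)%:E)%E.
  by apply: integral_ge0 => x _; rewrite lee_fin powR_ge0.
move: uq M0; case: (\int[mu]_x _)%E => [M| |] //; last first.
  by rewrite poweRyr ?invr_neq0 ?gt_eqF.
rewrite poweR_EFin !lee_fin => uq M0.
exists ((M `^ q^-1) `^ p); last by rewrite -!powRrM -qE mulVf ?gt_eqF ?powRr1.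
rewrite powR_ge0 /=.
have g0 : 0 <= g by rewrite -lee_fin -ug gagliardo_p_ge0.
have C0 : 0 <= calC d Cdp s p by rewrite ltW ?calC_gt0 ?sob.1.
apply: le_trans (ge0_ler_powR (ltW p0) _ _ uq) _;
  rewrite ?nnegrE ?mulr_ge0 ?powR_ge0 //.
by rewrite powRM ?powR_ge0 // -!powRrM mulVf ?gt_eqF // !powRr1.
Qed.

Lemma log_sobolev_fin (c g N : R) : 0 < c ->
  gagliardo_p mu s p u = g%:E -> Lp_p mu p u = N%:E -> 0 < N ->
  ((\int[mu]_x (`|u x| `^ p * ln (`|u x| `^ p / N))%:E)
     + (d%:R / s * (1 + ln c) * N)%:E
   <= (d%:R * expR (p - 1) * c `^ p * calC d Cdp s p / (s * p) * g)%:E)%E.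
Proof.
move=> c0 ug uN N0; have /andP[s0 _] := s01.
have p0 : 0 < p := lt_trans ltr01 p1.
have sp0 : 0 < s * p by rewrite mulr_gt0.
have [m /andP[m0 mCg] um] := sobolev_integral_powR ug.
have mup : measurable_fun setT (fun x => `|u x| `^ p).
  apply: (measurableT_comp (measurable_powR p)).
  by apply: measurableT_comp => //; exact: wsp.1.
have := integral_entropy_le_powR_norm mup (fun x => powR_ge0 _ _)
  (divrB_gt1 sp0 spd) N0 uN (p * (1 + ln c)) m0 um.
rewrite divrB_conjugate // [X in (X * N)%:E](_ : _ = d%:R / s * (1 + ln c)).
  2: by field; rewrite !gt_eqF.
move=> /le_trans; apply; rewrite lee_fin.
have -> : expR (p * (1 + ln c) - 1) = expR (p - 1) * c `^ p.
  by rewrite /powR gt_eqF // -expRD; congr expR; ring.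
rewrite [leRHS](_ : _ = d%:R / (s * p) * (expR (p - 1) * c `^ p) * (calC d Cdp s p * g)).
  2: by ring.
by rewrite ler_wpM2l // mulr_ge0 ?divr_ge0 ?mulr_ge0 ?expR_ge0 ?powR_ge0 ?ler0n ?ltW.
Qed.

End sobolev.

Theorem theorem1p2 (R : realType) (d : nat)
  (mu : {measure set (d.-tuple R) -> \bar R})
  (p s Cdp : R) (u : d.-tuple R -> R) (c : R) :
  (1 <= d)%N -> 1 < p -> 0 < s < 1 -> s * p < d%:R ->
  is_lebesgue mu ->
  sobolev_constant mu Cdp p ->
  in_Wsp mu s p u -> 0 < c ->
  let Np := fine (Lp_p mu p u) in
  ((\int[mu]_x (`|u x| `^ p * ln (`|u x| `^ p / Np))%:E)
     + (d%:R / s * (1 + ln c) * Np)%:E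
   <= (d%:R * expR (p - 1) * c `^ p * @calC R d Cdp s p / (s * p))%:E
        * gagliardo_p mu s p u)%E.
Proof.
move=> _ p1 s01 spd _ sob wsp c0; cbv zeta; set Np := fine _.
have /andP[s0 _] := s01.
have sp0 : 0 < s * p by rewrite mulr_gt0 // (lt_trans ltr01).
have K0 : 0 < d%:R * expR (p - 1) * c `^ p * calC d Cdp s p / (s * p).
  have d0 : 0 < d%:R := lt_trans sp0 spd.
  have C0 := calC_gt0 sob.1 s01 spd.
  by rewrite divr_gt0 // mulr_gt0 // mulr_gt0 ?powR_gt0 // mulr_gt0 ?expR_gt0.
(* [Np = 0] also covers an infinite L^p norm (fine +oo = 0); the integrand then
   vanishes because x / 0 = 0 and ln 0 = 0. *)
have [Np0|Np_gt0] := eqVneq Np 0.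
  rewrite Np0 mulr0 adde0 (eq_integral (fun _ => 0%E)) => [|x _]; last first.
    by rewrite invr0 mulr0 ln0 ?mulr0.
  by rewrite integral0 mule_ge0 ?gagliardo_p_ge0 // lee_fin ltW.
have {Np_gt0}Np_gt0 : 0 < Np by rewrite lt0r Np_gt0 fine_ge0 ?Lp_p_ge0.
have uN : Lp_p mu p u = Np%:E.
  by move: Np_gt0; rewrite /Np; case: (Lp_p mu p u) (Lp_p_ge0 mu p u) => //= _; rewrite ltxx.
move: (gagliardo_p_ge0 mu s p u).
case ug : (gagliardo_p mu s p u) => [g| |] // _; last first.
  by rewrite mulry gtr0_sg // mul1e leey.
by rewrite -EFinM; exact: log_sobolev_fin.
Qed.
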